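(* Every passivization-covariant operation $\mathcal Q$ maps passive states to (nonnegative multiples of) passive states: for every $\tau\in\mathsf P(S)$, $\mathcal Q(\tau)=c\,\tau'$ for some $c\ge0$ and $\tau'\in\mathsf P(S)$. Moreover, every energy-preserving channel is passivization-covariant.
   Context: $S$ is a $d$-dimensional quantum system with non-degenerate Hamiltonian $H=\sum_i E_i|i\rangle\langle i|$, $E_1<\dots<E_d$. $\mathsf P(S)$ is the set of passive states, i.e. density matrices $\sum_ip_i|i\rangle\langle i|$ with $p_1\ge\dots\ge p_d$. Let $\tau_j=\frac1j\sum_{i=1}^j|i\rangle\langle i|$ and let the canonical passivization be the channel $\Pi(\rho)=\sum_{i=1}^d\langle i|\rho|i\rangle\,\tau_i$. A passivization-covariant operation is a completely positive trace-non-increasing map $\mathcal Q$ with $\mathcal Q\circ\Pi=\Pi\circ\mathcal Q$. An energy-preserving channel is a CPTP map $\mathcal E$ with $\langle i|\mathcal E(\rho)|i\rangle=\langle i|\rho|i\rangle$ for all $\rho$ and $i$. *)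

From HB Require Import structures.
From mathcomp Require Import all_boot all_order all_algebra.
Set Implicit Arguments. Unset Strict Implicit. Unset Printing Implicit Defensive.
Import Order.TTheory GRing.Theory Num.Theory.
Local Open Scope ring_scope.

Section Quantum.
Variable C : numClosedFieldType.

Definition psdf (T : finType) (A : T -> T -> C) : Prop :=
  forall v : T -> C, 0 <= \sum_(i : T) \sum_(j : T) (v i)^* * A i j * v j.

Definition psd (d : nat) (A : 'M[C]_d) : Prop := psdf (fun i j => A i j).

Definition density (d : nat) (rho : 'M[C]_d) : Prop := psd rho /\ \tr rho = 1.

(* Passive states (energy eigenbasis = standard basis |0>,...,|d-1>, ordered
   by increasing energy): diagonal density matrices with non-increasing
   populations. *)
Definition passive (d : nat) (rho : 'M[C]_d) : Prop :=
  [/\ density rho,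
      (forall i j : 'I_d, i != j -> rho i j = 0) &
      (forall i j : 'I_d, (i <= j)%N -> rho j j <= rho i i)].

(* tau_k = 1/(k+1) * sum_{i <= k} |i><i|  (0-based index k) *)
Definition tauk (d : nat) (k : 'I_d) : 'M[C]_d :=
  \matrix_(i, j) (if (i == j) && (i <= k)%N then (k.+1%:R)^-1 else 0).

Definition passivization (d : nat) (rho : 'M[C]_d) : 'M[C]_d :=
  \sum_(k < d) rho k k *: tauk k.

(* Complete positivity: for every n, id_n (x) Q maps positive semidefinite
   operators on C^n (x) C^d to positive semidefinite operators. The operator
   id_n (x) Q acts blockwise: block (a,b) of X is mapped by Q. *)
Definition completely_positive (d : nat) (Q : 'M[C]_d -> 'M[C]_d) : Prop :=
  forall (n : nat) (X : ('I_n * 'I_d)%type -> ('I_n * 'I_d)%type -> C),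
    psdf X ->
    psdf (fun p q : ('I_n * 'I_d)%type =>
            Q (\matrix_(i, j) X (p.1, i) (q.1, j)) p.2 q.2).

Definition trace_nonincreasing (d : nat) (Q : 'M[C]_d -> 'M[C]_d) : Prop :=
  forall rho : 'M[C]_d, psd rho -> \tr (Q rho) <= \tr rho.

Definition trace_preserving (d : nat) (Q : 'M[C]_d -> 'M[C]_d) : Prop :=
  forall rho : 'M[C]_d, \tr (Q rho) = \tr rho.

Definition passivization_covariant (d : nat) (Q : {linear 'M[C]_d -> 'M[C]_d}) : Prop :=
  [/\ completely_positive Q, trace_nonincreasing Q &
      forall rho, Q (passivization rho) = passivization (Q rho)].

Definition energy_preserving_channel (d : nat) (Q : {linear 'M[C]_d -> 'M[C]_d}) : Prop :=
  [/\ completely_positive Q, trace_preserving Q &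
      forall (rho : 'M[C]_d) (i : 'I_d), Q rho i i = rho i i].

End Quantum.

From HB Require Import structures.
From mathcomp Require Import all_boot all_order all_algebra.
From mathcomp Require Import ring.
Import Order.TTheory GRing.Theory Num.Theory.
Local Open Scope ring_scope.
Set Implicit Arguments. Unset Strict Implicit.

(* Both halves rest on two facts about positive semidefinite (psd) matrices:
   their diagonal is nonnegative, and a vanishing diagonal entry forces its
   whole row and column to vanish (tested on vectors supported on two indices).

   Every passive state tau is the passivization of a diagonal psd
   matrix D (the weights of D are the telescoped gaps (k+1)(p_k - p_{k+1}) of
   the populations p of tau).  Hence Q tau = Q (Pi D) = Pi (Q D); Q D is psd
   by complete positivity, and the passivization of any psd matrix X is
   tr(X) times a passive state (or zero when tr X = 0).

   An energy-preserving channel E keeps the diagonal of every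
   input, so E |m><m| is a psd matrix with the diagonal of |m><m|, hence equals
   |m><m|; by linearity E fixes all diagonal matrices, in particular Pi rho.
   Since Pi rho only depends on the diagonal of rho, Pi (E rho) = Pi rho too. *)

Section Passivization.
Variable C : numClosedFieldType.

(* An affine function t |-> a + t s that is nonnegative on all real t has zero
   slope; used to kill off-diagonal entries of psd matrices. *)
Lemma real_affine_ge0_slope0 (a s : C) :
  (forall t : C, t \is Num.real -> 0 <= a + t * s) -> s = 0.
Proof.
move=> affine_ge0.
have a_real : a \is Num.real.
  by apply: ger0_real; have := affine_ge0 0 (rpred0 _); rewrite mul0r addr0.
have s_real : s \is Num.real.
  have := affine_ge0 1 (rpred1 _); rewrite mul1r => /ger0_real as_real.
  by rewrite -(addKr a s) rpredD // rpredN.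
apply/eqP/negP => s_neq0.
have := affine_ge0 (- (a + 1) / s).
rewrite divfK; last exact/negP.
rewrite rpredM ?rpredN ?rpredV ?rpredD ?rpred1 // => /(_ isT).
by rewrite opprD addrA subrr add0r ler0N1.
Qed.

Definition pair_vec (T : finType) (i j : T) (x y : C) (k : T) : C :=
  if k == i then x else if k == j then y else 0.

Lemma sum_pair_vec (T : finType) (i j : T) (x y : C) (F : T -> C) (f : C -> C) :
  i != j -> f 0 = 0 ->
  \sum_l f (pair_vec i j x y l) * F l = f x * F i + f y * F j.
Proof.
move=> ij f0.
rewrite (bigD1 i) //= (bigD1 j) 1?eq_sym //= big1 ?addr0.
  by rewrite /pair_vec eqxx [j == i]eq_sym (negbTE ij) eqxx.
by move=> k /andP [kj ki]; rewrite /pair_vec (negbTE ki) (negbTE kj) f0 mul0r.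
Qed.

Lemma quad_pair_vec (T : finType) (X : T -> T -> C) i j x y : i != j ->
  \sum_k \sum_l (pair_vec i j x y k)^* * X k l * pair_vec i j x y l =
  x^* * (X i i * x + X i j * y) + y^* * (X j i * x + X j j * y).
Proof.
move=> ij.
under eq_bigr => k _ do under eq_bigr => l _ do rewrite -mulrA.
under eq_bigr => k _ do rewrite -mulr_sumr.
have row_sum k : \sum_l X k l * pair_vec i j x y l = X k i * x + X k j * y.
  under eq_bigr => l _ do rewrite mulrC.
  by rewrite (@sum_pair_vec _ _ _ _ _ _ id) // mulrC [y * _]mulrC.
under eq_bigr => k _ do rewrite row_sum.
by rewrite (@sum_pair_vec _ _ _ _ _ _ (fun z => z^*)) // conjC0.
Qed.

Lemma psdf_diag_ge0 (T : finType) (X : T -> T -> C) i : psdf X -> 0 <= X i i.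
Proof.
pose e k : C := if k == i then 1 else 0.
move=> /(_ e); rewrite (bigD1 i) //= [X in _ + X]big1 ?addr0; last first.
  by move=> k ki; apply: big1 => l _; rewrite /e (negbTE ki) conjC0 !mul0r.
rewrite (bigD1 i) //= big1 ?addr0; last by move=> l li; rewrite /e (negbTE li) mulr0.
by rewrite /e eqxx conjC1 mul1r mulr1.
Qed.

(* In a psd matrix, a zero diagonal entry forces its row and column to vanish:
   with v = x e_i + e_j the form is X_jj + x^* X_ij + X_ji x, which must stay
   nonnegative for x real and for x purely imaginary. *)
Lemma psdf_zero_diag (T : finType) (X : T -> T -> C) i j : psdf X ->
  X i i = 0 -> X i j = 0 /\ X j i = 0.
Proof.
move=> psdX Xii0; have [<-|ij] := eqVneq i j; first by [].
have sum0 : X i j + X j i = 0.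
  apply: (@real_affine_ge0_slope0 (X j j)) => t t_real.
  have := psdX (pair_vec i j t 1); rewrite quad_pair_vec // conjC1 (conj_Creal t_real) Xii0.
  congr (0 <= _); ring.
have diff0 : 'i * (X j i - X i j) = 0.
  apply: (@real_affine_ge0_slope0 (X j j)) => t t_real.
  have := psdX (pair_vec i j (t * 'i) 1).
  rewrite quad_pair_vec // conjC1 rmorphM /= (conj_Creal t_real) conjCi Xii0.
  congr (0 <= _); ring.
move: diff0 => /eqP; rewrite mulf_eq0 (negbTE (neq0Ci _)) /= subr_eq0 => /eqP Xji.
rewrite Xji in sum0 *.
have : X i j *+ 2 = 0 by rewrite mulr2n.
by move/eqP; rewrite mulrn_eq0 /= => /eqP.
Qed.

Lemma sum_pair_ord1 (d : nat) (F : ('I_1 * 'I_d)%type -> ('I_1 * 'I_d)%type -> C) :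
  \sum_p \sum_q F p q = \sum_i \sum_j F (ord0, i) (ord0, j).
Proof.
rewrite (eq_bigr (fun p => \sum_q F (p.1, p.2) q)); last by move=> [a b].
rewrite -(pair_bigA _ (fun a b => \sum_q F (a, b) q)) big_ord1.
apply: eq_bigr => i _.
rewrite (eq_bigr (fun q => F (ord0, i) (q.1, q.2))); last by move=> [a b].
by rewrite -(pair_bigA _ (fun a b => F (ord0, i) (a, b))) big_ord1.
Qed.

(* A completely positive map is positive (take the trivial ancilla n = 1). *)
Lemma cp_psd (d : nat) (Q : 'M[C]_d -> 'M[C]_d) (M : 'M[C]_d) :
  completely_positive Q -> psd M -> psd (Q M).
Proof.
move=> cpQ psdM v.
have psd_lift : psdf (fun p q : ('I_1 * 'I_d)%type => M p.2 q.2).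
  by move=> w; rewrite sum_pair_ord1; apply: psdM.
have := cpQ 1%N _ psd_lift (fun p => v p.2).
rewrite sum_pair_ord1 /=.
suff -> : \matrix_(i, j) M i j = M by [].
by apply/matrixP => i j; rewrite mxE.
Qed.

Definition isdiag (d : nat) (A : 'M[C]_d) := forall i j : 'I_d, i != j -> A i j = 0.

Lemma psd_diag (d : nat) (A : 'M[C]_d) :
  isdiag A -> (forall i, 0 <= A i i) -> psd A.
Proof.
move=> diagA diag_ge0 v.
apply: sumr_ge0 => i _.
rewrite (bigD1 i) //= big1 ?addr0; last first.
  by move=> j ji; rewrite diagA 1?eq_sym // mulr0 mul0r.
by rewrite mulrAC mulrC mulr_ge0 // mulrC mul_conjC_ge0.
Qed.

Lemma diag_decomp (d : nat) (A : 'M[C]_d) :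
  isdiag A -> A = \sum_m A m m *: delta_mx m m.
Proof.
move=> diagA; apply/matrixP => i j; rewrite summxE.
rewrite (bigD1 i) //= big1 ?addr0; last first.
  by move=> k ki; rewrite !mxE [i == k]eq_sym (negbTE ki) /= mulr0.
rewrite !mxE /= eqxx andTb; have [<-|ij] := eqVneq i j; first by rewrite mulr1.
by rewrite diagA // mulr0.
Qed.

Lemma delta_mx_isdiag (d : nat) (m : 'I_d) : isdiag (delta_mx m m : 'M[C]_d).
Proof.
move=> i j ij; rewrite mxE; have [eim|] //= := eqVneq i m.
by have [ejm|] //= := eqVneq j m; move: ij; rewrite eim ejm eqxx.
Qed.

Lemma passivization_entry (d : nat) (X : 'M[C]_d) i j :
  passivization X i j =
    (i == j)%:R * \sum_(k < d | (i <= k)%N) X k k * (k.+1%:R)^-1.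
Proof.
rewrite /passivization summxE.
under eq_bigr => k _ do rewrite !mxE.
have [_|ij] /= := eqVneq i j; last first.
  by rewrite mul0r; apply: big1 => k _; rewrite mulr0.
rewrite mul1r [in RHS]big_mkcond /=; apply: eq_bigr => k _.
by case: ifP; rewrite ?mulr0.
Qed.

Lemma passivization_isdiag (d : nat) (X : 'M[C]_d) : isdiag (passivization X).
Proof. by move=> i j ij; rewrite passivization_entry (negbTE ij) mul0r. Qed.

Lemma passivization_diag_eq (d : nat) (X Y : 'M[C]_d) :
  (forall k, X k k = Y k k) -> passivization X = passivization Y.
Proof. by move=> XY; apply: eq_bigr => k _; rewrite XY. Qed.

Lemma mxtrace_passivization (d : nat) (X : 'M[C]_d) :
  \tr (passivization X) = \sum_k X k k.
Proof.
rewrite /mxtrace.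
under eq_bigr => i _ do rewrite passivization_entry eqxx mul1r.
rewrite (exchange_big_dep (fun _ => true)) //=.
apply: eq_bigr => k _.
have -> : \sum_(i < d | (i <= k)%N) X k k / k.+1%:R = (X k k / k.+1%:R) *+ k.+1.
  rewrite -(big_mkord (fun i => (i <= k)%N) (fun _ => X k k / k.+1%:R)).
  rewrite -(big_nat_widen _ _ _ (fun _ => true) _ (ltn_ord k)) /=.
  by rewrite sumr_const_nat subn0.
by rewrite -mulr_natr divfK // pnatr_eq0.
Qed.

Lemma sum_tail_mono (d : nat) (F : 'I_d -> C) (i j : nat) : (i <= j)%N ->
  (forall k, 0 <= F k) ->
  \sum_(k < d | (j <= k)%N) F k <= \sum_(k < d | (i <= k)%N) F k.
Proof.
move=> ij F_ge0.
rewrite [X in _ <= X](bigID (fun k : 'I_d => (j <= k)%N)) /=.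
have -> : \sum_(k < d | (i <= k)%N && (j <= k)%N) F k = \sum_(k < d | (j <= k)%N) F k.
  apply: eq_bigl => k; apply/andP/idP => [[]//|jk]; split => //.
  exact: leq_trans ij jk.
by rewrite lerDl sumr_ge0.
Qed.

Lemma normalized_passivization_passive (d : nat) (X : 'M[C]_d) :
  psd X -> \sum_k X k k != 0 ->
  passive ((\sum_k X k k)^-1 *: passivization X).
Proof.
move=> psdX tr_neq0.
set t := \sum_k X k k.
have t_ge0 : 0 <= t by apply: sumr_ge0 => k _; apply: psdf_diag_ge0.
have entry i : (t^-1 *: passivization X) i i =
    t^-1 * \sum_(k < d | (i <= k)%N) X k k * (k.+1%:R)^-1.
  by rewrite mxE passivization_entry eqxx mul1r.
have weight_ge0 (k : 'I_d) : 0 <= X k k * (k.+1%:R)^-1.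
  by rewrite mulr_ge0 ?invr_ge0 ?ler0n ?psdf_diag_ge0.
have offdiag0 : isdiag (t^-1 *: passivization X).
  by move=> i j ij; rewrite mxE passivization_isdiag // mulr0.
split=> //; last first.
  by move=> i j ij; rewrite !entry ler_wpM2l ?invr_ge0 ?sum_tail_mono.
split; last by rewrite mxtraceZ mxtrace_passivization -/t mulVf.
apply: psd_diag => // i.
by rewrite entry mulr_ge0 ?invr_ge0 //; apply: sumr_ge0.
Qed.

(* The passivization of a psd matrix is a nonnegative multiple of a passive
   state; the passive state sigma only serves as witness when it is zero. *)
Lemma passivization_psd_scaled (d : nat) (X sigma : 'M[C]_d) :
  psd X -> passive sigma ->
  exists c : C, 0 <= c /\
    exists tau' : 'M[C]_d, passive tau' /\ passivization X = c *: tau'.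
Proof.
move=> psdX passive_sigma.
have diag_ge0 (k : 'I_d) : true -> 0 <= X k k by move=> _; apply: psdf_diag_ge0.
have [tr0|tr_neq0] := eqVneq (\sum_k X k k) 0.
  exists 0; split=> //; exists sigma; split=> //.
  rewrite scale0r; apply: big1 => k _.
  by rewrite (psumr_eq0P diag_ge0 tr0) // scale0r.
exists (\sum_k X k k); split; first exact: sumr_ge0.
exists ((\sum_k X k k)^-1 *: passivization X).
split; first exact: normalized_passivization_passive.
by rewrite scalerA divff // scale1r.
Qed.

(* Every passive state tau is Pi(D) for the diagonal psd matrix D with weights
   D_kk = (k+1)(p_k - p_{k+1}), where p_k = tau_kk and p_d = 0. *)
Lemma passive_is_passivization (d : nat) (tau : 'M[C]_d) : passive tau ->
  exists D : 'M[C]_d, psd D /\ passivization D = tau.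
Proof.
case: d tau => [|d] tau [[psd_tau tr1] offdiag0 mono].
  by move: tr1; rewrite /mxtrace big_ord0 => /eqP; rewrite eq_sym oner_eq0.
pose p (n : nat) : C := if (n < d.+1)%N then tau (inord n) (inord n) else 0.
have p_val (i : 'I_d.+1) : p i = tau i i by rewrite /p ltn_ord inord_val.
have p_mono n : (n < d.+1)%N -> p n.+1 <= p n.
  move=> nd; rewrite /p nd; case: ifP => [Sn_d|_]; last exact: psdf_diag_ge0.
  by apply: mono; rewrite !inordK // ltnW.
pose D : 'M[C]_d.+1 :=
  \matrix_(i, j) if i == j then i.+1%:R * (p i - p i.+1) else 0.
exists D; split.
  apply: psd_diag => [i j ij|i]; rewrite mxE ?(negbTE ij) // eqxx.
  by rewrite mulr_ge0 ?ler0n // subr_ge0 p_mono.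
apply/matrixP => i j; rewrite passivization_entry.
under eq_bigr => k _ do rewrite mxE eqxx mulrC mulKf ?pnatr_eq0 //.
have -> : \sum_(k < d.+1 | (i <= k)%N) (p k - p k.+1) = p i.
  rewrite (eq_bigl (fun k : 'I_d.+1 => true && (i <= k)%N)) //.
  rewrite -(@big_geq_mkord _ _ _ i d.+1 xpredT (fun k => p k - p k.+1)).
  rewrite (telescope_sumr_eq (fun k => - p k)) => [||k _].
  - by rewrite /p ltnn oppr0 add0r opprK.
  - exact: ltnW (ltn_ord i).
  - by rewrite opprK addrC.
have [<-|ij] := eqVneq i j; first by rewrite mul1r p_val.
by rewrite mul0r offdiag0.
Qed.

(* First half: covariant operations map passive states to multiples of passive
   states, since Q (Pi D) = Pi (Q D) with Q D psd. *)
Lemma covariant_maps_passive (d : nat) (Q : {linear 'M[C]_d -> 'M[C]_d}) :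
  passivization_covariant Q ->
  forall tau : 'M[C]_d, passive tau ->
    exists c : C, 0 <= c /\
      exists tau' : 'M[C]_d, passive tau' /\ Q tau = c *: tau'.
Proof.
move=> [cpQ _ covQ] tau passive_tau.
have [D [psdD PiD]] := passive_is_passivization passive_tau.
rewrite -PiD covQ.
exact: passivization_psd_scaled (cp_psd cpQ psdD) passive_tau.
Qed.

(* An energy-preserving channel fixes each projector |m><m|: the image is psd
   with the diagonal of |m><m|, so all entries off that diagonal vanish. *)
Lemma energy_preserving_delta (d : nat) (E : {linear 'M[C]_d -> 'M[C]_d}) m :
  energy_preserving_channel E -> E (delta_mx m m) = delta_mx m m.
Proof.
case=> cpE _ diagE.
have psd_delta : psd (delta_mx m m : 'M[C]_d).
  apply: psd_diag => [|i]; first exact: delta_mx_isdiag.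
  by rewrite mxE; case: (_ && _).
have psd_image := cp_psd cpE psd_delta.
have image_diag0 i : i != m -> E (delta_mx m m) i i = 0.
  by move=> im; rewrite diagE mxE (negbTE im).
apply/matrixP => i j; have [<-|ij] := eqVneq i j; first by rewrite diagE.
rewrite delta_mx_isdiag //; have [eim|im] := eqVneq i m.
  have jm : j != m by rewrite -eim eq_sym.
  by case: (psdf_zero_diag i psd_image (image_diag0 j jm)).
by case: (psdf_zero_diag j psd_image (image_diag0 i im)).
Qed.

Lemma energy_preserving_fix_diag (d : nat) (E : {linear 'M[C]_d -> 'M[C]_d})
    (A : 'M[C]_d) :
  energy_preserving_channel E -> isdiag A -> E A = A.
Proof.
move=> epE diagA.
rewrite [in LHS](diag_decomp diagA) linear_sum [in RHS](diag_decomp diagA).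
by apply: eq_bigr => m _; rewrite linearZ /= energy_preserving_delta.
Qed.

Lemma energy_preserving_covariant (d : nat) (E : {linear 'M[C]_d -> 'M[C]_d}) :
  energy_preserving_channel E -> passivization_covariant E.
Proof.
move=> epE; have [cpE tpE diagE] := epE.
split=> // [rho _|rho]; first by rewrite tpE.
rewrite energy_preserving_fix_diag //; last exact: passivization_isdiag.
by apply: passivization_diag_eq => k; rewrite diagE.
Qed.

End Passivization.

Theorem mainTheorem19 (C : numClosedFieldType) (d : nat) :
  (forall Q : {linear 'M[C]_d -> 'M[C]_d},
     passivization_covariant Q ->
     forall tau : 'M[C]_d, passive tau ->
       exists c : C, 0 <= c /\ exists tau' : 'M[C]_d, passive tau' /\ Q tau = c *: tau')
  /\
  (forall E : {linear 'M[C]_d -> 'M[C]_d},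
     energy_preserving_channel E -> passivization_covariant E).
Proof.
split; [exact: covariant_maps_passive | exact: energy_preserving_covariant].
Qed.
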